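(* Every causal stable model of a causal program $P$ is a causal model of $P$.
   Context: Fix a set of labels $Lb$ and a set of atoms $At$. Terms are built by $t::=l\mid\prod S\mid\sum S\mid t_1\cdot t_2$ with $l\in Lb$ and $S$ any (possibly empty or infinite) set of terms; $1:=\prod\emptyset$, $0:=\sum\emptyset$; finite sums/products written with $+$, $*$. Causal values are equivalence classes of terms modulo the axioms of a completely distributive complete lattice with meet $*$ and join $+$ together with: $t\cdot(u\cdot w)=(t\cdot u)\cdot w$; $t=t+u\cdot t\cdot w$ and $u\cdot t\cdot w=t*u\cdot t\cdot w$; $1\cdot t=t=t\cdot1$; $t\cdot0=0=0\cdot t$; $l\cdot l=l$ for labels $l$; $\cdot$ distributes over (possibly infinite) sums on both sides; for terms $c,d,e$ without $+$: $c\cdot d\cdot e=(c\cdot d)*(d\cdot e)$ if $d\ne1$, $c\cdot(d*e)=(c\cdot d)*(c\cdot e)$, $(c*d)\cdot e=(c\cdot e)*(d\cdot e)$. $\mathbf V$ is the set of values, ordered by $t\le u$ iff $t*u=t$; $\mathbf C\subseteq\mathbf V$ is the set of values with a representative without $+$. $G\le_{\max}t$ means $G\in\mathbf C$, $G\le t$ and no $G'\in\mathbf C$ has $G<G'\le t$. A causal query is $\psi:\mathbf C\times\mathbf V\to\{0,1\}$ with $\psi(G,t)\le\psi(G,u)$ whenever $t\ge u$; monotonic if $\psi(G,u)\le\psi(G',w)$ whenever $G\le G'$ (any $u,w$). A causal literal is $(\psi::A)$, $A\in At$. Literals: $(\psi::A)$ (positive), $\neg(\psi::A)$ (negative), $\neg\neg(\psi::A)$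 (consistent). A causal program is a set of rules $r:H\leftarrow B_1,\dots,B_m$ with $r\in Lb$ or $r=1$, $H\in At$, each $B_i$ a literal or a term. An interpretation is $I:At\to\mathbf V$, ordered pointwise. $I(\psi::A)=\sum\{G\le_{\max}I(A):\psi(G,I(A))=1\}$; $I(t)=t$ for terms; $I(\neg L)=1$ iff $I(L)=0$ (else $0$); $I(\neg\neg L)=1$ iff $I(L)\ne0$ (else $0$); $I\models L$ iff $I(L)\ne0$. $I$ is a causal model of $P$ iff $(I(B_1)*\dots*I(B_m))\cdot r\le I(H)$ for every rule (empty product $=1$). Reduct: $\psi^t(G,u)=1$ iff there is $G'\in\mathbf C$ with $G'\le G$, $G'\le_{\max}t$, $\psi(G',t)=1$ (else $0$). The reduct of $(\psi::A)$ w.r.t. $I$ is $(\psi::A)$ if $\psi$ is monotonic and $(\psi^{I(A)}::A)$ otherwise. $P^I$: (i) delete every rule whose body has a negative or consistent literal not satisfied by $I$, (ii) delete the remaining negative and consistent literals, (iii) replace each remaining causal literal by its reduct. $P^I$ has a least causal model; $I$ is a causal stable model of $P$ iff $I$ is the least causal model of $P^I$. *)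

From Stdlib Require Import Classical ClassicalEpsilon.

Set Implicit Arguments.
Set Universe Polymorphism.
Set Polymorphic Inductive Cumulativity.

(* Causal terms.  Infinitary products/sums are indexed by families    *)
(* [I -> term]; a set S of terms is the image of such a family.       *)
(* The inductive is universe polymorphic and cumulative: index types  *)
(* of term@{u} live in Type@{u}, so a sum indexed by a set of         *)
(* term@{u}'s (needed for the value of a causal literal) is a term    *)
(* at a level v > u, and term@{u} <= term@{v} by cumulativity.        *)
Inductive term@{u} (Lb : Type@{u}) : Type@{u+1} :=
| tLab : Lb -> term Lb
| tProd : forall I : Type@{u}, (I -> term Lb) -> term Lb
| tSum : forall I : Type@{u}, (I -> term Lb) -> term Lb
| tApp : term Lb -> term Lb -> term Lb.

Arguments tLab {Lb} l.
Arguments tProd {Lb} I f.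
Arguments tSum {Lb} I f.
Arguments tApp {Lb} t u.

Definition tOne@{u} {Lb : Type@{u}} : term@{u} Lb :=
  tProd False (fun x => match x with end).
Definition tZero@{u} {Lb : Type@{u}} : term@{u} Lb :=
  tSum False (fun x => match x with end).
Definition tMeet@{u} {Lb : Type@{u}} (t u : term@{u} Lb) : term@{u} Lb :=
  tProd bool (fun b => if b then t else u).
Definition tJoin@{u} {Lb : Type@{u}} (t u : term@{u} Lb) : term@{u} Lb :=
  tSum bool (fun b => if b then t else u).

Inductive noplus@{u} {Lb : Type@{u}} : term@{u} Lb -> Prop :=
| np_lab l : noplus (tLab l)
| np_prod (I : Type@{u}) f : (forall i : I, noplus (f i)) -> noplus (tProd I f)
| np_app t u : noplus t -> noplus u -> noplus (tApp t u).

(* a term mentions some label (used to express "d <> 1" for +-free d) *)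
Inductive has_label@{u} {Lb : Type@{u}} : term@{u} Lb -> Prop :=
| hl_lab l : has_label (tLab l)
| hl_prod (I : Type@{u}) f (i : I) : has_label (f i) -> has_label (tProd I f)
| hl_sum (I : Type@{u}) f (i : I) : has_label (f i) -> has_label (tSum I f)
| hl_appl t u : has_label t -> has_label (tApp t u)
| hl_appr t u : has_label u -> has_label (tApp t u).

(* The specific axioms of causal values (besides the lattice axioms),
   each as an equation  lhs = rhs. *)
Inductive caxiom@{u} {Lb : Type@{u}} : term@{u} Lb -> term@{u} Lb -> Prop :=
| ax_assoc t u w : caxiom (tApp t (tApp u w)) (tApp (tApp t u) w)
| ax_absorb_join t u w : caxiom t (tJoin t (tApp (tApp u t) w))
| ax_absorb_meet t u w : caxiom (tApp (tApp u t) w) (tMeet t (tApp (tApp u t) w))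
| ax_one_l t : caxiom (tApp tOne t) t
| ax_one_r t : caxiom (tApp t tOne) t
| ax_zero_r t : caxiom (tApp t tZero) tZero
| ax_zero_l t : caxiom (tApp tZero t) tZero
| ax_idem l : caxiom (tApp (tLab l) (tLab l)) (tLab l)
| ax_distr_l t (I : Type@{u}) f : caxiom (tApp t (tSum I f)) (tSum I (fun i => tApp t (f i)))
| ax_distr_r t (I : Type@{u}) f : caxiom (tApp (tSum I f) t) (tSum I (fun i => tApp (f i) t))
| ax_trans c d e : noplus c -> noplus d -> noplus e -> has_label d ->
    caxiom (tApp (tApp c d) e) (tMeet (tApp c d) (tApp d e))
| ax_app_meet_l c d e : noplus c -> noplus d -> noplus e ->
    caxiom (tApp c (tMeet d e)) (tMeet (tApp c d) (tApp c e))
| ax_app_meet_r c d e : noplus c -> noplus d -> noplus e ->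
    caxiom (tApp (tMeet c d) e) (tMeet (tApp c e) (tApp d e)).

(* Its symmetric
   part [teq] is the least congruence generated by the axioms of a
   completely distributive complete lattice plus the causal axioms;
   values = terms modulo [teq], and  t <= u  iff  t * u = t. *)
Inductive tle@{u} {Lb : Type@{u}} : term@{u} Lb -> term@{u} Lb -> Prop :=
| le_refl t : tle t t
| le_trans t u w : tle t u -> tle u w -> tle t w
| le_prod_lb (I : Type@{u}) f (i : I) : tle (tProd I f) (f i)
| le_prod_glb (I : Type@{u}) f t : (forall i : I, tle t (f i)) -> tle t (tProd I f)
| le_sum_ub (I : Type@{u}) f (i : I) : tle (f i) (tSum I f)
| le_sum_lub (I : Type@{u}) f t : (forall i : I, tle (f i) t) -> tle (tSum I f) t
| le_cdistr (I : Type@{u}) (J : I -> Type@{u}) (f : forall i, J i -> term@{u} Lb) :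
    tle (tProd I (fun i => tSum (J i) (f i)))
        (tSum (forall i, J i) (fun g => tProd I (fun i => f i (g i))))
| le_cdistr_dual (I : Type@{u}) (J : I -> Type@{u}) (f : forall i, J i -> term@{u} Lb) :
    tle (tProd (forall i, J i) (fun g => tSum I (fun i => f i (g i))))
        (tSum I (fun i => tProd (J i) (f i)))
| le_app_cong t t' u u' : tle t t' -> tle t' t -> tle u u' -> tle u' u ->
    tle (tApp t u) (tApp t' u')
| le_ax t u : caxiom t u -> tle t u
| le_ax_sym t u : caxiom t u -> tle u t.

Definition teq@{u} {Lb : Type@{u}} (t w : term@{u} Lb) : Prop := tle@{u} t w /\ tle@{u} w t.
Definition tlt@{u} {Lb : Type@{u}} (t w : term@{u} Lb) : Prop := tle@{u} t w /\ ~ tle@{u} w t.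

Definition inC@{u} {Lb : Type@{u}} (t : term@{u} Lb) : Prop :=
  exists c : term@{u} Lb, noplus@{u} c /\ teq@{u} t c.

Definition maxle@{u} {Lb : Type@{u}} (G t : term@{u} Lb) : Prop :=
  inC@{u} G /\ tle@{u} G t /\ forall G' : term@{u} Lb, inC@{u} G' -> tlt@{u} G G' -> tle@{u} G' t -> False.

(* Causal queries: {0,1}-valued functions on C x V, given as predicates
   on representatives (required to be invariant under equivalence). *)
Definition qry@{u} (Lb : Type@{u}) : Type@{u+1} := term@{u} Lb -> term@{u} Lb -> Prop.

Definition is_causal_query@{u} {Lb : Type@{u}} (psi : qry@{u} Lb) : Prop :=
  (forall G G' t t' : term@{u} Lb, inC@{u} G -> teq@{u} G G' -> teq@{u} t t' -> psi G t -> psi G' t') /\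
  (forall G t w : term@{u} Lb, inC@{u} G -> tle@{u} w t -> psi G t -> psi G w).

Definition monotonic_query@{u} {Lb : Type@{u}} (psi : qry@{u} Lb) : Prop :=
  forall G G' t w : term@{u} Lb, inC@{u} G -> inC@{u} G' -> tle@{u} G G' -> psi G t -> psi G' w.

Definition query_reduct@{u} {Lb : Type@{u}} (psi : qry@{u} Lb) (t : term@{u} Lb)
  : qry@{u} Lb :=
  fun G _ => exists G' : term@{u} Lb, inC@{u} G' /\ tle@{u} G' G /\ maxle@{u} G' t /\ psi G' t.

Inductive clit@{u} (Lb At : Type@{u}) : Type@{u+1} := CL (psi : qry@{u} Lb) (A : At).
Arguments CL {Lb At} psi A.

Inductive lit@{u} (Lb At : Type@{u}) : Type@{u+1} :=
| LPos : clit@{u} Lb At -> lit Lb At      (* (psi :: A)         *)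
| LNeg : clit@{u} Lb At -> lit Lb At      (* not (psi :: A)     *)
| LCons : clit@{u} Lb At -> lit Lb At.    (* not not (psi :: A) *)
Arguments LPos {Lb At} c.
Arguments LNeg {Lb At} c.
Arguments LCons {Lb At} c.

Inductive belem@{u} (Lb At : Type@{u}) : Type@{u+1} :=
| BLit : lit@{u} Lb At -> belem Lb At
| BTerm : term@{u} Lb -> belem Lb At.
Arguments BLit {Lb At} l.
Arguments BTerm {Lb At} t.

Inductive body@{u} (Lb At : Type@{u}) : Type@{u+1} :=
| bnil : body Lb At
| bcons : belem@{u} Lb At -> body Lb At -> body Lb At.
Arguments bnil {Lb At}.
Arguments bcons {Lb At} b bs.

Inductive in_body@{u} {Lb At : Type@{u}} (b : belem@{u} Lb At) : body@{u} Lb At -> Prop :=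
| ib_here bs : in_body b (bcons@{u} b bs)
| ib_there b' bs : in_body b bs -> in_body b (bcons@{u} b' bs).

(* r : H <- B1,...,Bm ; the label [None] stands for r = 1 *)
Inductive rule@{u} (Lb At : Type@{u}) : Type@{u+1} :=
| mkRule (rl : option Lb) (rh : At) (rb : body@{u} Lb At).
Arguments mkRule {Lb At} rl rh rb.

Definition rlab@{u} {Lb At : Type@{u}} (r : rule@{u} Lb At) : option Lb :=
  match r with mkRule l _ _ => l end.
Definition rhead@{u} {Lb At : Type@{u}} (r : rule@{u} Lb At) : At :=
  match r with mkRule _ h _ => h end.
Definition rbody@{u} {Lb At : Type@{u}} (r : rule@{u} Lb At) : body@{u} Lb At :=
  match r with mkRule _ _ b => b end.

Definition program@{u} (Lb At : Type@{u}) : Type@{u+1} := rule@{u} Lb At -> Prop.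

Definition clit_query@{u} {Lb At : Type@{u}} (c : clit@{u} Lb At) : qry@{u} Lb :=
  match c with CL psi _ => psi end.
Definition lit_clit@{u} {Lb At : Type@{u}} (l : lit@{u} Lb At) : clit@{u} Lb At :=
  match l with LPos c | LNeg c | LCons c => c end.

Definition causal_program@{u} {Lb At : Type@{u}} (P : program@{u} Lb At) : Prop :=
  forall r : rule@{u} Lb At, P r -> forall l : lit@{u} Lb At,
    in_body@{u} (BLit@{u} l) (rbody@{u} r) ->
    is_causal_query@{u} (clit_query@{u} (lit_clit@{u} l)).

(* Interpretations and their values.  Interpretations take values in  *)
(* term@{u}; the value of a causal literal (a sum over a set of        *)
(* term@{u}'s) and hence of rule bodies is computed in term@{v}.       *)
Definition interp@{u} (Lb At : Type@{u}) : Type@{u+1} := At -> term@{u} Lb.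

Definition interp_le@{u} {Lb At : Type@{u}} (I J : interp@{u} Lb At) : Prop :=
  forall A : At, tle@{u} (I A) (J A).

Definition eval_clit@{u v | u < v} {Lb At : Type@{u}} (I : interp@{u} Lb At)
  (c : clit@{u} Lb At) : term@{v} Lb :=
  match c with
  | CL psi A =>
      tSum@{v} (@sig (term@{u} Lb) (fun G => maxle@{u} G (I A) /\ psi G (I A)))
               (fun x => match x with exist _ G _ => G end)
  end.

Definition eval_lit@{u v | u < v} {Lb At : Type@{u}} (I : interp@{u} Lb At)
  (l : lit@{u} Lb At) : term@{v} Lb :=
  match l with
  | LPos c => eval_clit@{u v} I c
  | LNeg c => if excluded_middle_informative (teq@{v} (eval_clit@{u v} I c) tZero@{v})
              then tOne@{v} else tZero@{v}
  | LCons c => if excluded_middle_informative (teq@{v} (eval_clit@{u v} I c) tZero@{v})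
               then tZero@{v} else tOne@{v}
  end.

Definition sat_lit@{u v | u < v} {Lb At : Type@{u}} (I : interp@{u} Lb At)
  (l : lit@{u} Lb At) : Prop :=
  ~ teq@{v} (eval_lit@{u v} I l) tZero@{v}.

Definition eval_belem@{u v | u < v} {Lb At : Type@{u}} (I : interp@{u} Lb At)
  (b : belem@{u} Lb At) : term@{v} Lb :=
  match b with
  | BLit l => eval_lit@{u v} I l
  | BTerm t => t
  end.

Fixpoint eval_body@{u v | u < v} {Lb At : Type@{u}} (I : interp@{u} Lb At)
  (bs : body@{u} Lb At) : term@{v} Lb :=
  match bs with
  | bnil => tOne@{v}
  | bcons b bnil => eval_belem@{u v} I b
  | bcons b bs' => tMeet@{v} (eval_belem@{u v} I b) (eval_body I bs')
  end.

Definition label_term@{u} {Lb : Type@{u}} (r : option Lb) : term@{u} Lb :=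
  match r with Some l => tLab@{u} l | None => tOne@{u} end.

Definition causal_model@{u v | u < v} {Lb At : Type@{u}} (I : interp@{u} Lb At)
  (P : program@{u} Lb At) : Prop :=
  forall r : rule@{u} Lb At, P r ->
    tle@{v} (tApp@{v} (eval_body@{u v} I (rbody@{u} r)) (label_term@{v} (rlab@{u} r)))
            (I (rhead@{u} r)).

Definition is_neg_or_cons@{u} {Lb At : Type@{u}} (l : lit@{u} Lb At) : Prop :=
  match l with LPos _ => False | _ => True end.

Definition clit_reduct@{u} {Lb At : Type@{u}} (I : interp@{u} Lb At)
  (c : clit@{u} Lb At) : clit@{u} Lb At :=
  match c with
  | CL psi A => if excluded_middle_informative (monotonic_query@{u} psi)
                then CL@{u} psi A else CL@{u} (query_reduct@{u} psi (I A)) A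
  end.

Fixpoint body_reduct@{u} {Lb At : Type@{u}} (I : interp@{u} Lb At)
  (bs : body@{u} Lb At) : body@{u} Lb At :=
  match bs with
  | bnil => bnil@{u}
  | bcons (BLit (LPos c)) bs' =>
      bcons@{u} (BLit@{u} (LPos@{u} (clit_reduct@{u} I c))) (body_reduct I bs')
  | bcons (BLit (LNeg _)) bs' => body_reduct I bs'
  | bcons (BLit (LCons _)) bs' => body_reduct I bs'
  | bcons (BTerm t) bs' => bcons@{u} (BTerm@{u} t) (body_reduct I bs')
  end.

Definition program_reduct@{u v | u < v} {Lb At : Type@{u}} (P : program@{u} Lb At)
  (I : interp@{u} Lb At) : program@{u} Lb At :=
  fun r' => exists r : rule@{u} Lb At, P r /\
    (forall l : lit@{u} Lb At, in_body@{u} (BLit@{u} l) (rbody@{u} r) ->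
       is_neg_or_cons@{u} l -> sat_lit@{u v} I l) /\
    r' = mkRule@{u} (rlab@{u} r) (rhead@{u} r) (body_reduct@{u} I (rbody@{u} r)).

Definition causal_stable_model@{u v | u < v} {Lb At : Type@{u}} (I : interp@{u} Lb At)
  (P : program@{u} Lb At) : Prop :=
  causal_model@{u v} I (program_reduct@{u v} P I) /\
  forall J : interp@{u} Lb At,
    causal_model@{u v} J (program_reduct@{u v} P I) -> interp_le@{u} I J.

From Stdlib Require Import Classical ClassicalEpsilon.
Set Universe Polymorphism.

(* A rule of P either survives in the reduct P^I, with a body whose value is
   below the value of the original body (dropped literals only raise a meet,
   and the reduct psi^{I(A)} of a query accepts every G <=max I(A) that psi
   accepts), or it is deleted because some negative or consistent literal
   evaluates to 0 under I, which makes the original body value 0. In both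
   cases the rule is satisfied by I. *)

Lemma tle_one@{w} {Lb : Type@{w}} (t : term@{w} Lb) : tle@{w} t tOne@{w}.
Proof. apply le_prod_glb; intros []. Qed.

Lemma zero_tle@{w} {Lb : Type@{w}} (t : term@{w} Lb) : tle@{w} tZero@{w} t.
Proof. apply le_sum_lub; intros []. Qed.

(* Left monotonicity of [.]: t' = t + t', and [.] distributes over sums. *)
Lemma tApp_monol@{w} {Lb : Type@{w}} {t t' x : term@{w} Lb} :
  tle@{w} t t' -> tle@{w} (tApp@{w} t x) (tApp@{w} t' x).
Proof.
  intros le_tt'.
  assert (join_le : tle (tJoin t t') t').
  { apply le_sum_lub; intros [|]; [exact le_tt' | apply le_refl]. }
  assert (le_join : tle t' (tJoin t t')).
  { exact (le_sum_ub (fun b : bool => if b then t else t') false). }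
  eapply le_trans; [|exact (le_app_cong join_le le_join (le_refl _) (le_refl _))].
  eapply le_trans; [|apply le_ax_sym, ax_distr_r].
  exact (le_sum_ub (fun b : bool => tApp (if b then t else t') x) true).
Qed.

Lemma tApp_zerol@{w} {Lb : Type@{w}} {t x y : term@{w} Lb} :
  tle@{w} t tZero@{w} -> tle@{w} (tApp@{w} t x) y.
Proof.
  intros le_t0.
  eapply le_trans; [exact (le_app_cong le_t0 (zero_tle _) (le_refl x) (le_refl x))|].
  eapply le_trans; [apply le_ax, ax_zero_l | apply zero_tle].
Qed.

Section BodyValues.
Universes u v.
Constraint u < v.
Context {Lb At : Type@{u}} (I : interp@{u} Lb At).

Lemma eval_body_cons_le_head b bs :
  tle@{v} (eval_body@{u v} I (bcons b bs)) (eval_belem@{u v} I b).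
Proof.
  destruct bs as [|b' bs]; [apply le_refl|].
  exact (le_prod_lb (fun x : bool => if x then _ else _) true).
Qed.

Lemma eval_body_cons_le_tail b bs :
  tle@{v} (eval_body@{u v} I (bcons b bs)) (eval_body@{u v} I bs).
Proof.
  destruct bs as [|b' bs]; [apply tle_one|].
  exact (le_prod_lb (fun x : bool => if x then _ else _) false).
Qed.

Lemma eval_body_cons_glb b bs (x : term@{v} Lb) :
  tle@{v} x (eval_belem@{u v} I b) -> tle@{v} x (eval_body@{u v} I bs) ->
  tle@{v} x (eval_body@{u v} I (bcons b bs)).
Proof.
  intros le_head le_tail; destruct bs as [|b' bs]; [exact le_head|].
  apply le_prod_glb; intros [|]; assumption.
Qed.

Lemma eval_body_le_mem {b bs} :
  in_body@{u} b bs -> tle@{v} (eval_body@{u v} I bs) (eval_belem@{u v} I b).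
Proof.
  induction 1 as [bs|b' bs _ IH]; [apply eval_body_cons_le_head|].
  exact (le_trans (eval_body_cons_le_tail _ _) IH).
Qed.

Lemma eval_clit_le_reduct c :
  tle@{v} (eval_clit@{u v} I c) (eval_clit@{u v} I (clit_reduct@{u} I c)).
Proof.
  destruct c as [psi A]; unfold clit_reduct.
  destruct (excluded_middle_informative (monotonic_query psi)); [apply le_refl|].
  apply le_sum_lub; intros [G [G_max psiG]].
  assert (psiG_reduct : query_reduct psi (I A) G (I A)).
  { exists G; split; [exact (proj1 G_max)|].
    split; [apply le_refl | split; assumption]. }
  exact (le_sum_ub _ (exist _ G (conj G_max psiG_reduct))).
Qed.

Lemma eval_body_le_reduct bs :
  tle@{v} (eval_body@{u v} I bs) (eval_body@{u v} I (body_reduct@{u} I bs)).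
Proof.
  induction bs as [|b bs IH]; [apply le_refl|].
  pose proof (le_trans (eval_body_cons_le_tail b bs) IH) as le_tail.
  destruct b as [[c|c|c]|t]; simpl body_reduct; try exact le_tail;
    apply eval_body_cons_glb; try exact le_tail.
  - exact (le_trans (eval_body_cons_le_head (BLit (LPos c)) bs) (eval_clit_le_reduct c)).
  - apply eval_body_cons_le_head.
Qed.

Lemma rule_kept_or_body_zero (r : rule@{u} Lb At) :
  (forall l : lit@{u} Lb At, in_body@{u} (BLit@{u} l) (rbody@{u} r) ->
     is_neg_or_cons@{u} l -> sat_lit@{u v} I l)
  \/ tle@{v} (eval_body@{u v} I (rbody@{u} r)) tZero@{v}.
Proof.
  destruct (classic (exists l : lit@{u} Lb At, in_body@{u} (BLit@{u} l) (rbody@{u} r) /\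
                       ~ sat_lit@{u v} I l)) as [[l [l_in l_unsat]]|all_sat].
  - right; apply NNPP in l_unsat.
    exact (le_trans (eval_body_le_mem l_in) (proj1 l_unsat)).
  - left; intros l l_in _; apply NNPP; intros l_unsat.
    exact (all_sat (ex_intro _ l (conj l_in l_unsat))).
Qed.

End BodyValues.

Theorem mainTheorem14@{u v | u < v} (Lb At : Type@{u}) (P : program@{u} Lb At)
  (I : interp@{u} Lb At) :
  causal_program@{u} P ->
  causal_stable_model@{u v} I P ->
  causal_model@{u v} I P.
Proof.
  intros _ [I_model_reduct _] r r_in_P.
  destruct (rule_kept_or_body_zero I r) as [r_kept|body_zero].
  - pose proof (I_model_reduct _ (ex_intro _ r (conj r_in_P (conj r_kept eq_refl))))
      as reduct_rule.
    exact (le_trans (tApp_monol (eval_body_le_reduct I _)) reduct_rule).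
  - exact (tApp_zerol body_zero).
Qed.
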